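(* Let $n\geq 2$, let $M$ be an $n$-dimensional Riemannian manifold (possibly with boundary) and let $u:M\to\mathbb{R}^{n+1}$ be a proper isometric minimal immersion with $u(\partial M)\subset\Pi:=\{\bar x\in\mathbb{R}^{n+1}:x_{n+1}=0\}$. Let $N$ be a unit normal field along $u$, $e_{n+1}$ the last standard basis vector, $X:\mathbb{R}^{n+1}\to\Pi$ the orthogonal projection, $u_{n+1}$ the last coordinate of $u$, and $$f(\bar x)=|x|^{1-n}\varphi\!\left(\frac{x_{n+1}}{|x|}\right),\qquad \varphi(t)=\int_0^t(1+\tau^2)^{-n/2}d\tau,$$ where $\bar x=(x,x_{n+1})$, $x\in\mathbb{R}^n$. Then at every point $y\in M$ with $X(u(y))\neq 0$, $$\frac{1}{|u|^n}\leq h_n\frac{|\langle e_{n+1},N\rangle|}{|X(u)|^n}+\langle\nabla (f\circ u),\nabla u_{n+1}\rangle,$$ where $h_n=(n-1)\varphi(+\infty)=(n-1)\int_0^{\infty}(1+\tau^2)^{-n/2}d\tau$ and $\nabla$ denotes the gradient on $M$ with respect to the induced metric. *)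

From HB Require Import structures.
From mathcomp Require Import all_boot all_order all_algebra.
From mathcomp Require Import all_classical all_reals all_analysis.
Set Implicit Arguments. Unset Strict Implicit. Unset Printing Implicit Defensive.
Import Order.TTheory GRing.Theory Num.Theory.
Import numFieldNormedType.Exports.
Local Open Scope classical_set_scope.
Local Open Scope ring_scope.

Section Defs.
Variable R : realType.

(* Euclidean inner product and norm on row vectors (the default norm on
   matrices in mathcomp-analysis is the sup norm, so we define these). *)
Definition dot (m : nat) (p q : 'rV[R]_m) : R := (p *m q^T) 0 0.
Definition eucl (m : nat) (p : 'rV[R]_m) : R := Num.sqrt (dot p p).

Definition ebase (m : nat) (i : 'I_m) : 'rV[R]_m := delta_mx 0 i.

Definition lastc (n : nat) (p : 'rV[R]_n.+1) : R := p 0 ord_max.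
Definition Xproj (n : nat) (p : 'rV[R]_n.+1) : 'rV[R]_n.+1 :=
  \row_j (if j == ord_max then 0 else p 0 j).

Definition phi_int (n : nat) (tau : R) : R := powR (1 + tau ^+ 2) (- (n%:R / 2)).
Definition phi (n : nat) (t : R) : R :=
  if 0 <= t then Rintegral lebesgue_measure `[0, t] (phi_int n)
  else - Rintegral lebesgue_measure `[t, 0] (phi_int n).

Definition h (n : nat) : R := (n%:R - 1) * lim (phi n t @[t --> +oo]).

(* f(x, x_{n+1}) = |x|^{1-n} phi(x_{n+1}/|x|), with |x| = |X(xbar)| *)
Definition f (n : nat) (p : 'rV[R]_n.+1) : R :=
  (eucl (Xproj p) ^+ n.-1)^-1 * phi n (lastc p / eucl (Xproj p)).

(* Local description of the immersed manifold by a chart (parametrization)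
   u : D (open in R^n) -> R^{n+1}, with the induced metric. *)
Definition jac (n : nat) (u : 'rV[R]_n -> 'rV[R]_n.+1) (x : 'rV[R]_n)
  : 'M[R]_(n, n.+1) := \matrix_(i, j) ('D_(ebase i) u x) 0 j.

Definition metric (n : nat) (u : 'rV[R]_n -> 'rV[R]_n.+1) (x : 'rV[R]_n)
  : 'M[R]_n := jac u x *m (jac u x)^T.

Definition dcoord (n : nat) (g : 'rV[R]_n -> R) (x : 'rV[R]_n) : 'rV[R]_n :=
  \row_i 'D_(ebase i) g x.

(* <grad g1, grad g2> w.r.t. the induced metric = g^{ij} d_i g1 d_j g2 *)
Definition grad_inner (n : nat) (u : 'rV[R]_n -> 'rV[R]_n.+1)
  (g1 g2 : 'rV[R]_n -> R) (x : 'rV[R]_n) : R :=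
  (dcoord g1 x *m invmx (metric u x) *m (dcoord g2 x)^T) 0 0.

Definition unit_normal (n : nat) (u : 'rV[R]_n -> 'rV[R]_n.+1)
  (N : 'rV[R]_n -> 'rV[R]_n.+1) (x : 'rV[R]_n) : Prop :=
  dot (N x) (N x) = 1 /\ forall i : 'I_n, dot ('D_(ebase i) u x) (N x) = 0.

Definition mean_curv (n : nat) (u : 'rV[R]_n -> 'rV[R]_n.+1)
  (N : 'rV[R]_n -> 'rV[R]_n.+1) (x : 'rV[R]_n) : R :=
  \sum_(i < n) \sum_(j < n)
     invmx (metric u x) i j * dot ('D_(ebase i) ('D_(ebase j) u) x) (N x).

End Defs.
Arguments dot {R m}. Arguments eucl {R m}. Arguments ebase {R m}.
Arguments lastc {R n}. Arguments Xproj {R n}. Arguments phi_int {R}.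
Arguments phi {R}. Arguments h {R}. Arguments f {R}.
Arguments jac {R n}. Arguments metric {R n}. Arguments dcoord {R n}.
Arguments grad_inner {R n}. Arguments unit_normal {R n}. Arguments mean_curv {R n}.

(* Put r = |X(u)|, t = u_(n+1)/r and A = (n-1) phi + t phi'.  The Euclidean
   gradient of f at u is r^-n (- A(t) X(u)/r + phi'(t) e_(n+1)), and the
   induced-metric pairing of two gradients is the Euclidean pairing of their
   tangential parts, <a, b> - <a, N><N, b>.  Since |u|^-n = r^-n phi'(t), the
   claim becomes (- A s + phi' nu) nu <= h_n |nu| with s = <X(u), N>/r and
   nu = <e_(n+1), N>, where s^2 + nu^2 <= 1.  By Cauchy-Schwarz in the plane it
   suffices that A^2 + phi'^2 <= h_n^2: this function of t is even,
   nondecreasing on [0, oo) and tends to ((n-1) phi(oo))^2 = h_n^2. *)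

From HB Require Import structures.
From mathcomp Require Import all_boot all_order all_algebra.
From mathcomp Require Import all_classical all_reals all_analysis.
From mathcomp Require Import ring lra.
Set Implicit Arguments. Unset Strict Implicit. Unset Printing Implicit Defensive.
Import Order.TTheory GRing.Theory Num.Theory.
Import numFieldNormedType.Exports.
Local Open Scope classical_set_scope.
Local Open Scope ring_scope.

Section RealDerivative.
Variable R : realType.

Lemma is_derive_exprn (g : R -> R) (x dg : R) k : is_derive x 1 g dg ->
  is_derive x 1 (fun y => g y ^+ k) (k%:R * g x ^+ k.-1 * dg).
Proof. by move=> /(is_deriveX k); rewrite exprfctE. Qed.

Lemma is_derive_ndecr (g dg : R -> R) (a b : R) :
  (forall t, a <= t <= b -> is_derive t 1 g (dg t)) ->
  (forall t, a <= t <= b -> 0 <= dg t) -> a <= b -> g a <= g b.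
Proof.
move=> gd dg_ge0 ab; have gd' t : a <= t <= b -> derivable g t 1 by case/gd.
apply: (@ger0_derive1_ndecr _ g a b) => //.
- by move=> t; rewrite in_itv /= => /andP[ta tb]; apply: gd'; rewrite !ltW.
- move=> t; rewrite in_itv /= => /andP[ta tb].
  have atb : a <= t <= b by rewrite !ltW.
  by rewrite derive1E (derive_val (is_derive := gd t atb)) dg_ge0.
- apply: continuous_in_subspaceT => t; rewrite inE /= in_itv /= => atb.
  exact/differentiable_continuous/derivable1_diffP/gd'.
Qed.

End RealDerivative.

Lemma one_add_sqr_gt0 (R : realDomainType) (t : R) : 0 < 1 + t ^+ 2.
Proof. by rewrite ltr_pwDl // sqr_ge0. Qed.

Section Phi.
Variable R : realType.
Variable n : nat.
Hypothesis n_ge2 : (2 <= n)%N.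
Notation mu := (@lebesgue_measure R).

Definition dphi (t : R) : R := (Num.sqrt (1 + t ^+ 2) ^+ n)^-1.

Lemma sqrt_one_add_sqr_gt0 (t : R) : 0 < Num.sqrt (1 + t ^+ 2).
Proof. by rewrite sqrtr_gt0 one_add_sqr_gt0. Qed.

Lemma sqrt_one_add_sqr_ge1 (t : R) : 1 <= Num.sqrt (1 + t ^+ 2).
Proof. by rewrite -{1}sqrtr1 ler_wsqrtr // lerDl sqr_ge0. Qed.

Lemma sqr_sqrt_one_add_sqr (t : R) : Num.sqrt (1 + t ^+ 2) ^+ 2 = 1 + t ^+ 2.
Proof. by rewrite sqr_sqrtr // ltW // one_add_sqr_gt0. Qed.

Lemma phi_intE : phi_int n = dphi.
Proof.
apply/funext => t; rewrite /phi_int /dphi powRN mulrC powRrM.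
by rewrite powR12_sqrt ?ltW ?one_add_sqr_gt0 // powR_mulrn.
Qed.

Lemma dphi_gt0 (t : R) : 0 < dphi t.
Proof. by rewrite invr_gt0 exprn_gt0 // sqrt_one_add_sqr_gt0. Qed.

Lemma dphiN (t : R) : dphi (- t) = dphi t.
Proof. by rewrite /dphi sqrrN. Qed.

Lemma dphi_le (t : R) : dphi t <= (1 + t ^+ 2)^-1.
Proof.
rewrite /dphi -[in leRHS]sqr_sqrt_one_add_sqr.
rewrite lef_pV2 ?posrE ?exprn_gt0 ?sqrt_one_add_sqr_gt0 //.
by apply: ler_weXn2l; [exact: sqrt_one_add_sqr_ge1 | exact: n_ge2].
Qed.

Lemma is_derive_dphi (t : R) : is_derive t 1 dphi (- n%:R * t * dphi t / (1 + t ^+ 2)).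
Proof.
have dq : is_derive t 1 (fun s : R => 1 + s ^+ 2) (2 * t).
  by apply: is_derive_eq; rewrite /GRing.scale /=; ring.
have dS := @is_derive1_comp _ _ (fun s : R => 1 + s ^+ 2) _ _ _
  (is_derive1_sqrt (one_add_sqr_gt0 t)) dq.
have S0 := sqrt_one_add_sqr_gt0 t.
have := is_derive_exprn n dS; rewrite /comp => dSn.
have := @is_deriveV _ (fun s => Num.sqrt (1 + s ^+ 2) ^+ n) _ _ _
  (expf_neq0 n (lt0r_neq0 S0)) dSn => dV; apply: is_derive_eq.
have S2 := sqr_sqrt_one_add_sqr t.
rewrite /dphi; move: S0 S2 dV; set S := Num.sqrt _ => S0 <- _.
have S0' : S != 0 := lt0r_neq0 S0.
rewrite /GRing.scale /=; case: n => [|m] /=; rewrite ?exprS.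
  by rewrite !(mul0r, mulr0, oppr0).
by field; rewrite S0' expf_neq0.
Qed.

Lemma continuous_dphi : continuous dphi.
Proof.
by move=> t; case: (is_derive_dphi t) => /derivable1_diffP/differentiable_continuous.
Qed.

Lemma integrable_dphi (a b : R) : mu.-integrable `[a, b] (EFin \o dphi).
Proof.
apply: continuous_compact_integrable; first exact: segment_compact.
exact: continuous_subspaceT continuous_dphi.
Qed.

Lemma is_derive_int_dphi (a x : R) : a < x ->
  is_derive x 1 (fun z => \int[mu]_(t in `[a, z]) dphi t) (dphi x).
Proof.
move=> ax; have xx1 : x < x + 1 by rewrite ltrDl ltr01.
have [d v] := continuous_FTC1_closed xx1 (integrable_dphi a (x + 1)) ax
  (@continuous_dphi x).
by apply: DeriveDef; [exact: d | rewrite -derive1E v].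
Qed.

Lemma phiE (a x : R) : a < 0 -> a < x -> phi n x =
  \int[mu]_(t in `[a, x]) dphi t - \int[mu]_(t in `[a, 0]) dphi t.
Proof.
move=> a0 ax; rewrite /phi phi_intE; case: ifPn => [x0|].
- have := @Rintegral_itvB R dphi (BLeft a) (BRight x) 0 (integrable_dphi a x).
  rewrite !bnd_simp (ltW a0) x0 => /(_ isT isT) ->.
  rewrite Rintegral_itv_obnd_cbnd //; apply: integrableS (integrable_dphi 0 x) => //.
  by apply: subset_itvr; rewrite bnd_simp.
- rewrite -ltNge => x0.
  have := @Rintegral_itvB R dphi (BLeft a) (BRight 0) x (integrable_dphi a 0).
  rewrite !bnd_simp (ltW ax) (ltW x0) => /(_ isT isT) H.
  rewrite -opprB H Rintegral_itv_obnd_cbnd //.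
  apply: integrableS (integrable_dphi x 0) => //.
  by apply: subset_itvr; rewrite bnd_simp.
Qed.

Lemma is_derive_phi (x : R) : is_derive x 1 (phi n) (dphi x).
Proof.
pose a := Num.min x 0 - 1.
have [ax a0] : a < x /\ a < 0.
  have : Num.min x 0 <= x by rewrite ge_min lexx.
  have : Num.min x 0 <= 0 by rewrite ge_min lexx orbT.
  by rewrite /a; lra.
have : is_derive x 1 (fun z => \int[mu]_(t in `[a, z]) dphi t
                              - \int[mu]_(t in `[a, 0]) dphi t) (dphi x).
  by have := is_derive_int_dphi ax => ?; apply: is_derive_eq; rewrite subr0.
apply: near_eq_is_derive; near=> z; rewrite (phiE a0) //.
by near: z; exact: lt_nbhsr.
Unshelve. all: by end_near. Qed.

Lemma natr_pred_ge0 : 0 <= n%:R - 1 :> R.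
Proof. by rewrite subr_ge0 ler1n (ltnW n_ge2). Qed.

Lemma phi0 : phi n (0 : R) = 0.
Proof. by rewrite /phi lexx set_itv1 Rintegral_set1. Qed.

Lemma phiN (t : R) : phi n (- t) = - phi n t.
Proof.
suff : phi n (- t) + phi n t = phi n (- 0) + phi n 0.
  by rewrite oppr0 phi0 addr0 => /eqP; rewrite addr_eq0 => /eqP.
apply: (@is_derive_0_is_cst _ (fun x => phi n (- x) + phi n x)) => x.
have dN : is_derive x 1 (fun y : R => - y) (-1) by apply: is_derive_eq.
have := is_derive1_comp (is_derive_phi (- x)) dN; rewrite /comp => dpN.
have := is_derive_phi x => dp.
by apply: is_derive_eq; rewrite dphiN; ring.
Qed.

Lemma phi_ndecr (x y : R) : x <= y -> phi n x <= phi n y.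
Proof.
apply: (@is_derive_ndecr R (phi n) dphi) => t _; first exact: is_derive_phi.
exact/ltW/dphi_gt0.
Qed.

Lemma phi_ge0 (t : R) : 0 <= t -> 0 <= phi n t.
Proof. by move=> t0; rewrite -phi0 phi_ndecr. Qed.

(* [2 - 2/(1+t) - phi t] is nondecreasing on [0, oo), as
   [dphi t <= (1 + t^2)^-1 <= 2 (1 + t)^-2]. *)
Lemma phi_le2 (t : R) : phi n t <= 2.
Proof.
have [t0|t0] := lerP 0 t; last by rewrite (le_trans (phi_ndecr (ltW t0))) ?phi0.
pose k (x : R) := 2 - 2 * (1 + x)^-1 - phi n x.
suff : k 0 <= k t.
  rewrite /k phi0 addr0 invr1 mulr1 subrr sub0r.
  have : 0 <= 2 * (1 + t)^-1 by rewrite mulr_ge0 // invr_ge0; lra.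
  lra.
apply: (@is_derive_ndecr R k (fun x => 2 * ((1 + x) ^+ 2)^-1 - dphi x) 0 t _ _ t0)
  => x /andP[x0 _]; have x1 : 0 < 1 + x by lra.
- have d1 : is_derive x 1 (fun y : R => 1 + y) 1 by apply: is_derive_eq; ring.
  have := is_deriveV (lt0r_neq0 x1) d1 => dV; have := is_derive_phi x => dp.
  by rewrite /k; apply: is_derive_eq; rewrite /GRing.scale /=; field; lra.
- have q := one_add_sqr_gt0 x.
  have -> : 2 * ((1 + x) ^+ 2)^-1 =
      (1 + x ^+ 2)^-1 + (1 - x) ^+ 2 / ((1 + x) ^+ 2 * (1 + x ^+ 2)).
    by field; rewrite !lt0r_neq0.
  have : 0 <= (1 - x) ^+ 2 / ((1 + x) ^+ 2 * (1 + x ^+ 2)).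
    by rewrite divr_ge0 ?sqr_ge0 // mulr_ge0 ?sqr_ge0 // ltW.
  by have := dphi_le x; lra.
Qed.

Lemma has_sup_phi : has_sup (range (@phi R n)).
Proof.
split; first by exists (phi n 0), 0.
by exists 2 => _ [t _ <-]; exact: phi_le2.
Qed.

Lemma phi_le_sup (t : R) : phi n t <= sup (range (@phi R n)).
Proof. by have /ubP := sup_upper_bound has_sup_phi; apply; exists t. Qed.

Lemma hE : h n = (n%:R - 1) * sup (range (@phi R n)).
Proof.
congr (_ * _); apply: cvg_lim => //.
apply: nondecreasing_cvgr; first by move=> x y; exact: phi_ndecr.
by case: has_sup_phi.
Qed.

Lemma h_ge0 : 0 <= h n :> R.
Proof.
rewrite hE mulr_ge0 ?natr_pred_ge0 //.
by rewrite (le_trans _ (phi_le_sup 0)) ?phi0.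
Qed.

Definition phiA (t : R) : R := (n%:R - 1) * phi n t + t * dphi t.
Definition phiG (t : R) : R := phiA t ^+ 2 + dphi t ^+ 2.

Lemma is_derive_phiA (t : R) : is_derive t 1 phiA (n%:R * dphi t / (1 + t ^+ 2)).
Proof.
have := is_derive_phi t => dp; have := is_derive_dphi t => dd.
rewrite /phiA; apply: is_derive_eq; rewrite /GRing.scale /=.
by field; rewrite lt0r_neq0 ?one_add_sqr_gt0.
Qed.

Lemma is_derive_phiG (t : R) :
  is_derive t 1 phiG (2 * n%:R * (n%:R - 1) * phi n t * dphi t / (1 + t ^+ 2)).
Proof.
have := is_derive_exprn 2 (is_derive_phiA t) => dA.
have := is_derive_exprn 2 (is_derive_dphi t) => dd.
rewrite /phiG; apply: is_derive_eq; rewrite /phiA.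
by field; rewrite lt0r_neq0 ?one_add_sqr_gt0.
Qed.

Lemma phiGN (t : R) : phiG (- t) = phiG t.
Proof. by rewrite /phiG /phiA dphiN phiN; ring. Qed.

Lemma phiG_ndecr (t s : R) : 0 <= t -> t <= s -> phiG t <= phiG s.
Proof.
move=> t0 ts; apply: (is_derive_ndecr (fun x _ => is_derive_phiG x) _ ts).
move=> x /andP[tx _]; have x0 : 0 <= x := le_trans t0 tx.
apply/divr_ge0/ltW/one_add_sqr_gt0/mulr_ge0/ltW/dphi_gt0.
by rewrite mulr_ge0 ?phi_ge0 // mulr_ge0 ?natr_pred_ge0 // mulr_ge0.
Qed.

(* At [s >= 1], [phiA s <= h + 1/s] and [dphi s <= 1/s]. *)
Lemma phiG_le (s : R) : 1 <= s -> phiG s <= h n ^+ 2 + (2 * h n + 2) / s.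
Proof.
move=> s1; have s0 : 0 < s by lra.
have H0 := h_ge0; have q := one_add_sqr_gt0 s; have ps := dphi_gt0 s.
have qs : (1 + s ^+ 2)^-1 <= s^-1 by rewrite lef_pV2 ?posrE //; nra.
have dps : dphi s <= s^-1 := le_trans (dphi_le s) qs.
have sdps : s * dphi s <= s^-1.
  have : s * dphi s <= s * (1 + s ^+ 2)^-1 by rewrite ler_pM2l // dphi_le.
  have -> : s * (1 + s ^+ 2)^-1 = s^-1 - s^-1 * (1 + s ^+ 2)^-1.
    by field; rewrite !lt0r_neq0.
  have : 0 <= s^-1 * (1 + s ^+ 2)^-1 by rewrite mulr_ge0 ?invr_ge0 ?ltW.
  lra.
have a0 : 0 <= (n%:R - 1) * phi n s.
  by rewrite mulr_ge0 ?natr_pred_ge0 ?phi_ge0 // ltW.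
have a1 : (n%:R - 1) * phi n s <= h n by rewrite hE ler_wpM2l ?natr_pred_ge0 ?phi_le_sup.
have d1 : s^-1 <= 1 by rewrite invf_le1.
rewrite /phiG /phiA mulrDl (mulrC _ s^-1); set d := s^-1 in dps sdps d1 *.
have d0 : 0 <= d by rewrite ltW // invr_gt0.
have b0 : 0 <= s * dphi s by rewrite mulr_ge0 // ltW.
nra.
Qed.

Lemma phiG_le_sqrh (t : R) : phiG t <= h n ^+ 2.
Proof.
wlog t0 : t / 0 <= t.
  by move=> H; have [/H //|t0] := lerP 0 t; rewrite -phiGN H // oppr_ge0 ltW.
apply/ler_addgt0Pr => e e0; have H0 := h_ge0.
pose s := Num.max t 1 + (2 * h n + 2) / e.
have : t <= Num.max t 1 /\ 1 <= Num.max t 1 by rewrite !le_max !lexx orbT.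
have : 0 <= (2 * h n + 2) / e by rewrite divr_ge0 // ?ltW //; lra.
move=> k0 [ts1 s1]; have s0 : 0 < s by rewrite /s; lra.
apply: le_trans (phiG_ndecr t0 (_ : t <= s)) _; first by rewrite /s; lra.
apply: le_trans (phiG_le (_ : 1 <= s)) _; first by rewrite /s; lra.
by rewrite lerD2l ler_pdivrMr // [e * s]mulrC -ler_pdivrMr // /s; lra.
Qed.

End Phi.

Section Dot.
Variables (R : realType) (m : nat).
Implicit Types p q w : 'rV[R]_m.

Lemma dotE p q : dot p q = \sum_k p 0 k * q 0 k.
Proof. by rewrite /dot mxE; apply: eq_bigr => k _; rewrite mxE. Qed.

Lemma dotC p q : dot p q = dot q p.
Proof. by rewrite !dotE; apply: eq_bigr => k _; rewrite mulrC. Qed.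

Lemma dotDl p q w : dot (p + q) w = dot p w + dot q w.
Proof. by rewrite !dotE -big_split; apply: eq_bigr => k _; rewrite mxE mulrDl. Qed.

Lemma dotZl a p w : dot (a *: p) w = a * dot p w.
Proof. by rewrite !dotE mulr_sumr; apply: eq_bigr => k _; rewrite mxE mulrA. Qed.

Lemma dotBl p q w : dot (p - q) w = dot p w - dot q w.
Proof. by rewrite dotDl -scaleN1r dotZl mulN1r. Qed.

Lemma dotBr p q w : dot w (p - q) = dot w p - dot w q.
Proof. by rewrite dotC dotBl !(dotC w). Qed.

Lemma dotZr a p w : dot w (a *: p) = a * dot w p.
Proof. by rewrite dotC dotZl (dotC w). Qed.

Lemma dot_ge0 p : 0 <= dot p p.
Proof. by rewrite dotE sumr_ge0 // => k _; rewrite -expr2 sqr_ge0. Qed.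

Lemma dot_eq0 p : dot p p = 0 -> p = 0.
Proof.
rewrite dotE => /eqP; rewrite psumr_eq0 => [/allP H|k _]; last first.
  by rewrite -expr2 sqr_ge0.
apply/rowP => k; rewrite mxE; have := H k (mem_index_enum k).
by rewrite -expr2 sqrf_eq0 => /eqP.
Qed.

Lemma dot_gt0 p : p != 0 -> 0 < dot p p.
Proof.
move=> p0; rewrite lt_neqAle dot_ge0 andbT eq_sym.
by apply: contra p0 => /eqP /dot_eq0 ->.
Qed.

Lemma dot_cauchy_schwarz p q : dot p q ^+ 2 <= dot p p * dot q q.
Proof.
have [/dot_eq0 ->|pp0] := eqVneq (dot p p) 0.
  by rewrite -(scale0r 0) !dotZl !mul0r expr0n.
have pp : 0 < dot p p by rewrite lt_neqAle eq_sym pp0 dot_ge0.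
have := dot_ge0 (dot p p *: q - dot p q *: p).
rewrite !(dotBl, dotBr, dotZl, dotZr) [dot q p]dotC => H.
rewrite -subr_ge0 -(pmulr_rge0 _ pp).
by move: H; congr (_ <= _); ring.
Qed.

End Dot.

Section LastCoordinate.
Variables (R : realType) (m : nat).
Implicit Types p q : 'rV[R]_m.+1.

Lemma dot_ebase_lastc p : dot (ebase ord_max) p = lastc p.
Proof.
rewrite dotE (bigD1 ord_max) //= big1 ?addr0; first by rewrite mxE !eqxx mul1r.
by move=> k kn; rewrite mxE (negbTE kn) andbF mul0r.
Qed.

Lemma lastc_ebase : lastc (ebase ord_max : 'rV[R]_m.+1) = 1.
Proof. by rewrite /lastc mxE !eqxx. Qed.

Lemma dot_Xproj_ebase p : dot (Xproj p) (ebase ord_max) = 0.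
Proof. by rewrite dotC dot_ebase_lastc /lastc mxE eqxx. Qed.

Lemma dot_Xproj p q : dot (Xproj p) q = dot (Xproj p) (Xproj q).
Proof. by rewrite !dotE; apply: eq_bigr => k _; rewrite !mxE; case: eqP; rewrite ?mul0r. Qed.

Lemma dot_Xproj_lastc p : dot p p = dot (Xproj p) (Xproj p) + lastc p ^+ 2.
Proof.
rewrite !dotE !big_ord_recr /= !mxE eqxx mul0r addr0 expr2; congr (_ + _).
by apply: eq_bigr => k _; rewrite !mxE -val_eqE /= ltn_eqF.
Qed.

End LastCoordinate.

Section TangentProjection.
Variables (R : realType) (n : nat).

Lemma row_free_of_ker0 m k (A : 'M[R]_(m, k)) :
  (forall x : 'rV[R]_m, x *m A = 0 -> x = 0) -> row_free A.
Proof.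
move=> H; rewrite -kermx_eq0; apply/eqP/row_matrixP => i; rewrite row0.
by apply: H; apply/sub_kermxP; exact: row_sub.
Qed.

Lemma unitmx_gram m k (J : 'M[R]_(m, k)) : row_free J -> J *m J^T \in unitmx.
Proof.
move=> rfJ; rewrite -row_free_unit; apply: row_free_of_ker0 => x xG.
have : dot (x *m J) (x *m J) = 0.
  by rewrite /dot trmx_mul mulmxA -(mulmxA x) xG mul0mx mxE.
by move/dot_eq0 => xJ; apply: (row_free_inj rfJ); rewrite xJ mul0mx.
Qed.

Variables (J : 'M[R]_(n, n.+1)) (N : 'rV[R]_n.+1).
Hypotheses (rfJ : row_free J) (NN : N *m N^T = 1%:M) (JN : J *m N^T = 0).

Lemma unitmx_col_normal : (col_mx N J : 'M[R]_(1 + n, n.+1)) \in unitmx.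
Proof.
rewrite -row_free_unit; apply: row_free_of_ker0 => x.
rewrite -[x]hsubmxK mul_row_col => xM.
have x1 : lsubmx (x : 'rV_(1 + n)) = 0.
  have := congr1 (mulmx^~ N^T) xM.
  by rewrite mulmxDl -!mulmxA NN JN mulmx0 addr0 mulmx1 mul0mx.
move: xM; rewrite x1 mul0mx add0r -{1}(mul0mx _ J) => /(row_free_inj rfJ) ->.
by rewrite row_mx0.
Qed.

(* Both sides kill [N] and fix the rows of [J], which together span R^(n+1). *)
Lemma tangent_projection : J^T *m invmx (J *m J^T) *m J = 1%:M - N^T *m N.
Proof.
have NJ : N *m J^T = 0 by rewrite -[N]trmxK -trmx_mul JN trmx0.
have Mu : ((col_mx N J)^T : 'M[R]_(n.+1)) \in unitmx.
  by rewrite unitmx_tr unitmx_col_normal.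
apply/eqP; rewrite -subr_eq0; apply/eqP.
rewrite -[LHS](mulmxK Mu); set D := _ - _.
have DM : D *m ((col_mx N J)^T : 'M[R]_(n.+1, 1 + n)) = 0.
  rewrite tr_col_mx mul_mx_row /D !mulmxBl -!mulmxA JN NJ NN !mulmx0 mulmx1.
  by rewrite !mul1mx (mulVmx (unitmx_gram rfJ)) mulmx1 !subrr subr0 subrr row_mx0.
by rewrite [D *m _]DM mul0mx.
Qed.

End TangentProjection.

Lemma grad_innerE (R : realType) n (u N : 'rV[R]_n -> 'rV[R]_n.+1)
    (g1 g2 : 'rV[R]_n -> R) y (a b : 'rV[R]_n.+1) :
  row_free (jac u y) -> unit_normal u N y ->
  dcoord g1 y = a *m (jac u y)^T -> dcoord g2 y = b *m (jac u y)^T ->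
  grad_inner u g1 g2 y = dot a b - dot a (N y) * dot (N y) b.
Proof.
move=> rfJ [NN1 JN0] dg1 dg2.
have NN : N y *m (N y)^T = 1%:M.
  by apply/matrixP => i j; rewrite !ord1 -[LHS]/(dot _ _) NN1 mxE.
have JN : jac u y *m (N y)^T = 0.
  apply/matrixP => i j; rewrite ord1 !mxE -[RHS](JN0 i) dotE.
  by apply: eq_bigr => k _; rewrite !mxE.
rewrite /grad_inner dg1 dg2 /metric trmx_mul trmxK -!mulmxA.
rewrite 2![X in a *m X]mulmxA (tangent_projection rfJ NN JN).
rewrite mulmxBl mul1mx mulmxBr [LHS]mxE [X in _ + X]mxE; congr (_ - _).
by rewrite !mulmxA -(mulmxA (a *m _)) mxE big_ord1.
Qed.

Section Gradient.
Variables (R : realType) (m : nat).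

Lemma derive_dir_curve (W : normedModType R) (F : 'rV[R]_m -> W) y v :
  'D_v F y = (fun s : R => F (s *: v + y))^`()%classic 0.
Proof.
rewrite /derive1 /derive scale0r add0r.
by under [in RHS]eq_fun do rewrite addr0.
Qed.

Lemma derivable_dir_curve (W : normedModType R) (F : 'rV[R]_m -> W) y v :
  derivable F y v -> derivable (fun s : R => F (s *: v + y)) 0 1.
Proof.
rewrite /derivable /= scale0r add0r => dF.
suff -> : (fun h : R => h^-1 *: (F ((h%:A + 0) *: v + y) - F y)) =
  (fun h : R => h^-1 *: (F (h *: v + y) - F y)) by [].
by apply/funext => h; rewrite [_%:A]mulr1 addr0.
Qed.

(* A gradient tested along curves only: this is all the chain rule needs. *)
Definition has_grad (F : 'rV[R]_m -> R) (p a : 'rV[R]_m) : Prop :=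
  forall c : R -> 'rV[R]_m, derivable c 0 1 -> c 0 = p ->
  (F \o c)^`()%classic 0 = dot a ('D_1 c 0).

Lemma is_derive_coord (c : R -> 'rV[R]_m) x k : derivable c x 1 ->
  is_derive x 1 (fun s => c s 0 k) ('D_1 c x 0 k).
Proof.
move=> dc; split; first exact: (derivable_mxP c x 1).1 dc 0 k.
by rewrite (derive_mx dc) mxE.
Qed.

End Gradient.

Lemma dcoord_comp (R : realType) n (F : 'rV[R]_n.+1 -> R)
    (u : 'rV[R]_n -> 'rV[R]_n.+1) y a :
  differentiable u y -> has_grad F (u y) a -> dcoord (F \o u) y = a *m (jac u y)^T.
Proof.
move=> du gF; apply/rowP => i.
have dui : derivable u y (ebase i) by exact: diff_derivable.
rewrite !mxE derive_dir_curve.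
transitivity (dot a ('D_1 (fun s : R => u (s *: ebase i + y)) 0)).
  by apply: gF; [exact: derivable_dir_curve | rewrite scale0r add0r].
by rewrite -derive1E -derive_dir_curve dotE; apply: eq_bigr => j _; rewrite !mxE.
Qed.

Section LastCoordinateGradient.
Variables (R : realType) (m : nat).

Lemma lastc_has_grad (p : 'rV[R]_m.+1) : has_grad lastc p (ebase ord_max).
Proof.
move=> c dc _; rewrite dot_ebase_lastc.
by rewrite derive1E (derive_val (is_derive := is_derive_coord ord_max dc)).
Qed.

Lemma is_derive_sqr_Xproj (c : R -> 'rV[R]_m.+1) x : derivable c x 1 ->
  is_derive x 1 (fun s => dot (Xproj (c s)) (Xproj (c s)))
    (2 * dot (Xproj (c x)) ('D_1 c x)).
Proof.
move=> dc; pose X k (s : R) := if k == ord_max then 0 else c s 0 k.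
have dX k : is_derive x 1 (fun s => X k s ^+ 2) (2 * X k x * 'D_1 c x 0 k).
  rewrite /X; case: eqP => _; first by apply: is_derive_eq; rewrite mulr0 mul0r.
  by have := is_derive_exprn 2 (is_derive_coord k dc) => ?; apply: is_derive_eq.
have -> : (fun s => dot (Xproj (c s)) (Xproj (c s))) = \sum_k (fun s => X k s ^+ 2).
  apply/funext => s; rewrite fct_sumE dotE.
  by apply: eq_bigr => k _; rewrite !mxE -expr2.
apply: is_derive_eq; rewrite dotE mulr_sumr; apply: eq_bigr => k _.
by rewrite !mxE /X mulrA; case: eqP.
Qed.

End LastCoordinateGradient.

Section FGradient.
Variables (R : realType) (n : nat).
Hypothesis n_ge2 : (2 <= n)%N.

Definition fgrad (p : 'rV[R]_n.+1) : 'rV[R]_n.+1 :=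
  let r := eucl (Xproj p) in let t := lastc p / r in
  (r ^+ n)^-1 *: ((- phiA n t / r) *: Xproj p + dphi n t *: ebase ord_max).

Lemma dot_fgrad p v : dot (fgrad p) v =
  (eucl (Xproj p) ^+ n)^-1 * (- phiA n (lastc p / eucl (Xproj p)) / eucl (Xproj p)
     * dot (Xproj p) v + dphi n (lastc p / eucl (Xproj p)) * lastc v).
Proof. by rewrite /fgrad dotZl dotDl !dotZl dot_ebase_lastc. Qed.

Lemma f_has_grad p : Xproj p != 0 -> has_grad (f n) p (fgrad p).
Proof.
(* Along [c], [f] is [r^-(n-1) * phi (z / r)] with [r = sqrt Q], [z = lastc c]. *)
move=> Xp0 c dc c0; rewrite dot_fgrad -c0.
set Q := fun s => dot (Xproj (c s)) (Xproj (c s)).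
have Q0 : 0 < Q 0 by rewrite /Q c0 dot_gt0.
have dr := is_derive1_comp (is_derive1_sqrt Q0) (is_derive_sqr_Xproj dc).
have r0 : Num.sqrt (Q 0) != 0 by rewrite lt0r_neq0 // sqrtr_gt0.
have := @is_deriveV _ (Num.sqrt \o Q) _ _ _ r0 dr; rewrite /comp => drV.
have dz := is_derive_coord ord_max dc.
have dt : is_derive (0 : R) 1 (fun s => lastc (c s) * (Num.sqrt (Q s))^-1)
   (lastc (c 0) * (- (Num.sqrt (Q 0)) ^- 2 *
      ((2 * Num.sqrt (Q 0))^-1 * (2 * dot (Xproj (c 0)) ('D_1 c 0))))
    + lastc ('D_1 c 0) * (Num.sqrt (Q 0))^-1).
  by apply: is_derive_eq; rewrite /GRing.scale /lastc /=; ring.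
have := is_derive1_comp (@is_derive_phi R n _) dt; rewrite /comp => dphit.
have := @is_deriveV _ (fun s => (Num.sqrt \o Q) s ^+ n.-1) _ _ _
  (expf_neq0 n.-1 r0) (is_derive_exprn n.-1 dr) => drn.
have := is_deriveM drn dphit => df.
move: df; set F := (_ * _)%R => df.
have -> : (fun s => f n (c s)) = F by apply/funext.
rewrite derive1E (derive_val (is_derive := df)) /GRing.scale /= /phiA.
rewrite -[eucl _]/(Num.sqrt (Q 0)); move: r0; set r := Num.sqrt (Q 0) => r0.
have n0 : (0 < n)%N := ltnW n_ge2.
have n1 : (0 < n.-1)%N by rewrite -ltnS (prednK n0).
have rn : r ^+ n = r * (r * r ^+ n.-2) by rewrite -!exprS (prednK n1) (prednK n0).
have nn : n%:R = n.-1%:R + 1 :> R by rewrite natr1 (prednK n0).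
rewrite rn nn -(prednK n1) /= !exprS.
by field; rewrite r0 expf_neq0.
Qed.

End FGradient.

Lemma cauchy_schwarz2_mul_le (R : realFieldType) (a b s nu H : R) :
  a ^+ 2 + b ^+ 2 <= H ^+ 2 -> 0 <= H -> s ^+ 2 + nu ^+ 2 <= 1 ->
  (- a * s + b * nu) * nu <= H * `|nu|.
Proof.
move=> abH H0 snu; set w := - a * s + b * nu.
have w2 : w ^+ 2 <= H ^+ 2.
  have LW : (a ^+ 2 + b ^+ 2) * (s ^+ 2 + nu ^+ 2) - w ^+ 2 = (a * nu + b * s) ^+ 2.
    by rewrite /w; ring.
  have : 0 <= (a * nu + b * s) ^+ 2 := sqr_ge0 _.
  have : 0 <= a ^+ 2 + b ^+ 2 by rewrite addr_ge0 ?sqr_ge0.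
  by rewrite -LW; nra.
have wH : w <= H by nra.
have Hw : - H <= w by nra.
by have [nu0|nu0] := lerP 0 nu; [rewrite ger0_norm | rewrite ltr0_norm]; nra.
Qed.

Section PointwiseInequality.
Variables (R : realType) (n : nat) (p : 'rV[R]_n.+1).
Hypotheses (n_ge2 : (2 <= n)%N) (Xp0 : Xproj p != 0).
Let r := eucl (Xproj p).
Let t := lastc p / r.

Lemma eucl_Xproj_gt0 : 0 < r.
Proof. by rewrite sqrtr_gt0 dot_gt0. Qed.

Lemma sqr_eucl_Xproj : dot (Xproj p) (Xproj p) = r ^+ 2.
Proof. by rewrite sqr_sqrtr // dot_ge0. Qed.

Lemma inv_eucl_exprn : (eucl p ^+ n)^-1 = (r ^+ n)^-1 * dphi n t.
Proof.
have r0 := eucl_Xproj_gt0.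
have -> : eucl p = r * Num.sqrt (1 + t ^+ 2).
  rewrite /eucl dot_Xproj_lastc sqr_eucl_Xproj.
  rewrite (_ : r ^+ 2 + _ = r ^+ 2 * (1 + t ^+ 2)); last first.
    by rewrite /t; field; rewrite gt_eqF.
  by rewrite sqrtrM ?sqr_ge0 // sqrtr_sqr ger0_norm // ltW.
by rewrite exprMn invfM.
Qed.

Lemma unit_vector_coord_le1 (v : 'rV[R]_n.+1) : dot v v = 1 ->
  (dot (Xproj p) v / r) ^+ 2 + lastc v ^+ 2 <= 1.
Proof.
move=> vv; have r0 := eucl_Xproj_gt0.
have := dot_cauchy_schwarz (Xproj p) (Xproj v).
rewrite -dot_Xproj sqr_eucl_Xproj.
have -> : dot (Xproj v) (Xproj v) = 1 - lastc v ^+ 2.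
  by rewrite -vv [dot v v]dot_Xproj_lastc addrK.
rewrite expr_div_n => H.
have : dot (Xproj p) v ^+ 2 / r ^+ 2 <= 1 - lastc v ^+ 2.
  by rewrite ler_pdivrMr ?exprn_gt0 // mulrC.
lra.
Qed.

Lemma fgrad_ineq (v : 'rV[R]_n.+1) : dot v v = 1 ->
  (eucl p ^+ n)^-1 <= h n * `|lastc v| / r ^+ n
    + (dot (fgrad p) (ebase ord_max) - dot (fgrad p) v * lastc v).
Proof.
move=> vv; have r0 := eucl_Xproj_gt0.
rewrite inv_eucl_exprn !dot_fgrad -/r -/t dot_Xproj_ebase lastc_ebase mulr0 add0r mulr1.
have := cauchy_schwarz2_mul_le (phiG_le_sqrh n_ge2 t) (@h_ge0 R n n_ge2)
  (unit_vector_coord_le1 vv).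
have K0 : 0 <= (r ^+ n)^-1 by rewrite invr_ge0 exprn_ge0 // ltW.
move=> /(ler_wpM2l K0); set K := (r ^+ n)^-1; set S := dot (Xproj p) v => H.
have -> : h n * `|lastc v| / r ^+ n = K * (h n * `|lastc v|) by rewrite mulrC.
suff -> : K * (- phiA n t / r * S + dphi n t * lastc v) * lastc v =
  K * ((- phiA n t * (S / r) + dphi n t * lastc v) * lastc v) by lra.
by rewrite /K; field; rewrite expf_neq0 ?andbT lt0r_neq0.
Qed.

End PointwiseInequality.

Unset Implicit Arguments.

Theorem lemma1 (R : realType) (n : nat) (hn : (2 <= n)%N)
  (D : set 'rV[R]_n) (hD : open D)
  (u : 'rV[R]_n -> 'rV[R]_n.+1) (N : 'rV[R]_n -> 'rV[R]_n.+1)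
  (hu1 : forall x, D x -> differentiable u x)
  (hu2 : forall (i : 'I_n) x, D x -> differentiable ('D_(ebase i) u) x)
  (himm : forall x, D x -> row_free (jac u x))
  (hN : forall x, D x -> unit_normal u N x)
  (hmin : forall x, D x -> mean_curv u N x = 0)
  (y : 'rV[R]_n) (hy : D y) (hX : Xproj (u y) != 0) :
  (eucl (u y) ^+ n)^-1 <=
    h n * `|dot (ebase ord_max) (N y)| / eucl (Xproj (u y)) ^+ n
    + grad_inner u (f n \o u) (fun x => lastc (u x)) y.
Proof.
have Ny := hN y hy.
have df : dcoord (f n \o u) y = fgrad (u y) *m (jac u y)^T.
  exact: dcoord_comp (hu1 y hy) (f_has_grad hn hX).
have dz : dcoord (fun x => lastc (u x)) y = ebase ord_max *m (jac u y)^T.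
  exact: dcoord_comp (hu1 y hy) (@lastc_has_grad R n (u y)).
rewrite (grad_innerE (himm y hy) Ny df dz) [dot (N y) _]dotC !dot_ebase_lastc.
exact (fgrad_ineq hn hX Ny.1).
Qed.
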